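(* Let $X\subseteq\mathbf{P}(\mathbf{w})$, $\mathbf{w}=(w_0,\dots,w_n)$, be a closed subscheme of dimension $d$ with Hilbert quasi-polynomial $HQ_X(t)=\sum_{i=0}^d c_i(t)t^i$. Let $m$ be a positive integer, let $\mathbf{w}'=(w_0,\dots,w_n,m)$, and let $X'\subseteq\mathbf{P}(\mathbf{w}')$ be the $m$-cone over $X$. Then \[ \deg(X')=\frac{d!}{q'}\sum_{\substack{0\le j<q\\ \gcd(m,q)\mid j}} c_d(j), \] where $q=\operatorname{lcm}(w_0,\dots,w_n)$ and $q'=\operatorname{lcm}(w_0,\dots,w_n,m)$.
   Context: $\Bbbk$ algebraically closed; $S(\mathbf{w})=\Bbbk[x_0,\dots,x_n]$ graded by $\deg x_i=w_i$, $\mathbf{P}(\mathbf{w})=\operatorname{Proj}S(\mathbf{w})$. For a closed subscheme $X$ of dimension $d$ with homogeneous ideal $I_X$, the Hilbert function $t\mapsto\dim_\Bbbk(S(\mathbf{w})/I_X)_t$ agrees for $t\gg0$ with a quasi-polynomial $HQ_X(t)=\sum_{i=0}^d c_i(t)t^i$ whose coefficients $c_i:\mathbb{Z}\to\Bbbk$ are periodic, $c_d\ne0$, with period dividing $\operatorname{lcm}(w_0,\dots,w_n)$. The degree of $X$ is $\deg X=d!\,c_d(0)$. If $\mathbf{w}'$ is obtained by appending $m$ to $\mathbf{w}$, the $m$-cone over $X$ is the subscheme of $\mathbf{P}(\mathbf{w}')$ defined by $I_X S(\mathbf{w}')$. *)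

From HB Require Import structures.
From mathcomp Require Import all_boot all_order all_algebra.
From mathcomp Require Import mpoly.
Set Implicit Arguments. Unset Strict Implicit. Unset Printing Implicit Defensive.
Import Order.TTheory GRing.Theory Num.Theory.
Local Open Scope ring_scope.

Section WeightedGraded.
Variables (k : fieldType) (N : nat) (w : 'I_N -> nat).

Definition wdeg (a : 'X_{1..N}) : nat := (\sum_(i < N) w i * a i)%N.

Definition whomog (t : nat) (p : {mpoly k[N]}) : bool :=
  all (fun a => wdeg a == t) (msupp p).

Definition wcomp (t : nat) (p : {mpoly k[N]}) : {mpoly k[N]} :=
  \sum_(a <- msupp p | wdeg a == t) p@_a *: 'X_[a].

Definition is_ideal (I : {mpoly k[N]} -> Prop) : Prop :=
  [/\ I 0,
      forall p q, I p -> I q -> I (p + q)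
    & forall r p, I p -> I (r * p)].

Definition is_homog_ideal (I : {mpoly k[N]} -> Prop) : Prop :=
  is_ideal I /\ forall p t, I p -> I (wcomp t p).

(* s is a family of elements of S(w)_t whose classes in (S(w)/J)_t are
   linearly independent over k *)
Definition indep_mod (J : {mpoly k[N]} -> Prop) (t : nat)
    (s : seq {mpoly k[N]}) : Prop :=
  all (whomog t) s /\
  forall c : 'I_(size s) -> k,
    J (\sum_(i < size s) c i *: s`_i) -> forall i, c i = 0.

(* hilb_fun J t h : dim_k (S(w)/J)_t = h  (dimension = maximal size of a
   linearly independent family) *)
Definition hilb_fun (J : {mpoly k[N]} -> Prop) (t h : nat) : Prop :=
  (exists s, size s = h /\ indep_mod J t s) /\
  (forall s, indep_mod J t s -> (size s <= h)%N).

Definition hilb_eventually (J : {mpoly k[N]} -> Prop) (Q : int -> rat) : Prop :=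
  exists t0 : nat, forall t : nat, (t0 <= t)%N ->
    exists h : nat, hilb_fun J t h /\ h%:R = Q t%:Z.

End WeightedGraded.

Definition hquasipoly (c : nat -> int -> rat) (d : nat) (t : int) : rat :=
  \sum_(i < d.+1) c i t * (t%:~R) ^+ i.

Definition periodic_coeffs (c : nat -> int -> rat) (d q : nat) : Prop :=
  forall i t, (i <= d)%N -> c i (t + q%:Z)%R = c i t.

Definition wlcm (N : nat) (w : 'I_N -> nat) : nat := \big[lcmn/1%N]_(i < N) w i.

Definition wext (n : nat) (w : 'I_n.+1 -> nat) (m : nat) : 'I_n.+2 -> nat :=
  fun i => if unlift ord_max i is Some j then w j else m.

(* the m-cone: the ideal I S(w') of S(w') = k[x_0..x_n, x_{n+1}] generated by I *)
Definition cone_ideal (k : fieldType) (n : nat) (I : {mpoly k[n.+1]} -> Prop)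
    : {mpoly k[n.+2]} -> Prop :=
  fun g => exists s : seq ({mpoly k[n.+2]} * {mpoly k[n.+1]}),
    (forall x, x \in s -> I x.2) /\
    g = \sum_(x <- s) x.1 * mwiden x.2.

(* S(w') = S(w)[y] with deg y = m, and every f in S(w') splits uniquely as
   f = f(x, 0) + y g, where f lies in the cone ideal I S(w') iff f(x, 0) lies in I
   and g in I S(w').  Hence the Hilbert functions satisfy H'(t) = H(t) + H'(t - m),
   so HQ'(t + m) - HQ'(t) = HQ(t + m) for t >> 0.  Iterating r = q / gcd(m, q)
   times gives HQ'(t + q') - HQ'(t) = sum_(1 <= j <= r) HQ(t + j m).  Along t = q' s
   both sides are polynomials in s, and their coefficients of s^d give
   (d + 1) q' c'_(d+1)(0) = sum_(1 <= j <= r) c_d(j m).  Finally j m, 1 <= j <= r,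
   runs exactly once through the residues modulo q that are divisible by gcd(m, q). *)

From HB Require Import structures.
From mathcomp Require Import all_boot all_order all_algebra.
From mathcomp Require Import mpoly ring.
From Stdlib Require Import Classical.
Import Order.TTheory GRing.Theory Num.Theory.
Local Open Scope ring_scope.
Set Implicit Arguments. Unset Strict Implicit. Unset Printing Implicit Defensive.

Section RowIndependence.
Variables (K : fieldType) (N : nat).
Implicit Types (P : 'rV[K]_N -> Prop).

Definition rV_subspace P :=
  [/\ P 0, forall u v, P u -> P v -> P (u + v) & forall a u, P u -> P (a *: u)].

Definition indep_rows_mod P p (C : 'M[K]_(p, N)) := forall a, P (a *m C) -> a = 0.

Lemma rV_subspace_rowspace P :
  rV_subspace P -> exists B : 'M[K]_N, forall v, P v <-> (v <= B)%MS.
Proof.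
(* Otherwise every row space inside P could be enlarged, up to rank N.+1. *)
move=> [P0 PD PZ]; apply: NNPP => noB.
have grow (B : 'M[K]_N) : (forall v, (v <= B)%MS -> P v) ->
    exists2 B' : 'M[K]_N, (\rank B < \rank B')%N & forall v, (v <= B')%MS -> P v.
  move=> sBP; have [v Pv vNB] : exists2 v, P v & ~~ (v <= B)%MS.
    apply: NNPP => noV; apply: noB; exists B => v; split=> [Pv|]; last exact: sBP.
    by apply/negPn/negP => vNB; apply: noV; exists v.
  exists (B + v)%MS.
    have: (B < B + v)%MS.
      by rewrite ltmxE addsmxSl; apply: contra vNB; apply: submx_trans (addsmxSr B v).
    by rewrite ltmxErank => /andP [].
  move=> u /sub_addsmxP [[x z] /= ->]; apply: PD; first exact/sBP/submxMl.
  by have /sub_rVP [a ->] := submxMl z v; apply: PZ.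
have rank_ge j : exists2 B : 'M[K]_N, (j <= \rank B)%N & forall v, (v <= B)%MS -> P v.
  elim: j => [|j [B leB sBP]]; first by exists 0 => // v; rewrite submx0 => /eqP ->.
  by have [B' ltB' sB'P] := grow B sBP; exists B' => //; apply: leq_ltn_trans ltB'.
by have [B /leq_trans/(_ (rank_leq_col B))] := rank_ge N.+1; rewrite ltnn.
Qed.

Lemma rV_dim_le_add P1 P2 h1 h2 : rV_subspace P1 ->
  (forall v, P1 v -> P2 v -> v = 0) ->
  (forall p (C : 'M_(p, N)), indep_rows_mod P1 C -> (p <= h1)%N) ->
  (forall p (C : 'M_(p, N)), indep_rows_mod P2 C -> (p <= h2)%N) ->
  (N <= h1 + h2)%N.
Proof.
move=> /rV_subspace_rowspace [B P1B] P12 le_h1 le_h2.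
have rkBC : (\rank B^C%MS <= h1)%N.
  apply: (le_h1 _ (row_base B^C%MS)) => a /P1B aB; apply/eqP.
  rewrite -(mulmx_free_eq0 _ (row_base_free _)) -submx0 -(capmx_compl B) sub_capmx aB.
  by rewrite -(eq_row_base B^C%MS) submxMl.
have rkB : (\rank B <= h2)%N.
  apply: (le_h2 _ (row_base B)) => a P2a; apply/eqP.
  rewrite -(mulmx_free_eq0 _ (row_base_free _)); apply/eqP/P12 => //.
  by apply/P1B; rewrite -(eq_row_base B) submxMl.
by rewrite -(subnK (rank_leq_col B)) -mxrank_compl leq_add.
Qed.

End RowIndependence.

Section LinearCombination.
Variables (K : fieldType) (V : lmodType K) (s : seq V).

Definition lincomb (v : 'rV[K]_(size s)) : V := \sum_i v 0 i *: s`_i.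

Lemma lincomb_is_linear : linear lincomb.
Proof.
move=> a u v; rewrite /lincomb scaler_sumr -big_split; apply: eq_bigr => i _.
by rewrite !mxE scalerDl scalerA.
Qed.

HB.instance Definition _ := GRing.isLinear.Build K 'rV[K]_(size s) V *:%R lincomb
  lincomb_is_linear.

End LinearCombination.

Section WeightedHomogeneity.
Variables (k : fieldType) (N : nat) (w : 'I_N -> nat).
Implicit Types (p q : {mpoly k[N]}) (J : {mpoly k[N]} -> Prop).

Lemma wdegD a b : wdeg w (a + b)%MM = (wdeg w a + wdeg w b)%N.
Proof. by rewrite /wdeg -big_split; apply: eq_bigr => i _; rewrite mnmDE mulnDr. Qed.

Lemma whomogP t p : reflect (forall a, p@_a != 0 -> wdeg w a = t) (whomog w t p).
Proof.
apply: (iffP allP) => [h a pa | h a]; first by apply/eqP/h; rewrite mcoeff_msupp.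
by rewrite mcoeff_msupp => /h ->.
Qed.

Lemma whomog0 t : whomog w t (0 : {mpoly k[N]}).
Proof. by apply/whomogP => a; rewrite mcoeff0 eqxx. Qed.

Lemma whomogD t p q : whomog w t p -> whomog w t q -> whomog w t (p + q).
Proof.
move=> /whomogP hp /whomogP hq; apply/whomogP => a; rewrite mcoeffD.
by have [-> | /hp //] := eqVneq p@_a 0; rewrite add0r => /hq.
Qed.

Lemma whomogZ t c p : whomog w t p -> whomog w t (c *: p).
Proof.
move=> /whomogP hp; apply/whomogP => a; rewrite mcoeffZ.
by have [-> | /hp //] := eqVneq p@_a 0; rewrite mulr0 eqxx.
Qed.

Lemma whomog_lincomb t (s : seq {mpoly k[N]}) v :
  all (whomog w t) s -> whomog w t (lincomb (s := s) v).
Proof.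
move=> /allP hs; rewrite /lincomb; elim/big_ind: _ => [||i _].
- exact: whomog0.
- exact: whomogD.
- by apply/whomogZ/hs/mem_nth.
Qed.

Lemma ideal_sum J (I : eqType) (r : seq I) (F : I -> {mpoly k[N]}) :
  is_ideal J -> {in r, forall i, J (F i)} -> J (\sum_(i <- r) F i).
Proof. by move=> [J0 JD _] JF; rewrite big_seq; elim/big_ind: _. Qed.

Lemma idealZ J c p : is_ideal J -> J p -> J (c *: p).
Proof. by move=> [_ _ JM]; rewrite -mul_mpolyC; apply: JM. Qed.

Lemma hilb_fun_indep_rows J t h M (f : {linear 'rV[k]_M -> {mpoly k[N]}}) :
  hilb_fun w J t h -> (forall v, whomog w t (f v)) ->
  forall (p : nat) (C : 'M_(p, M)), indep_rows_mod (fun v => J (f v)) C -> (p <= h)%N.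
Proof.
move=> [_ le_h] homf p C indC.
have [s [sz hom_s s_row]] : exists s, [/\ size s = p, all (whomog w t) s &
    forall i : 'I_p, s`_i = f (row i C)].
  exists [seq f (row i C) | i <- enum 'I_p]; split; first by rewrite size_map size_enum_ord.
    by apply/allP => _ /mapP [i _ ->].
  by move=> i; rewrite (nth_map i) ?size_enum_ord // nth_ord_enum.
subst p; apply: le_h; split=> // c Jc i.
suff /rowP/(_ i) : \row_j c j = 0 by rewrite !mxE.
apply: indC; rewrite mulmx_sum_row linear_sum; move: Jc; congr J.
by apply: eq_bigr => j _; rewrite linearZ mxE s_row.
Qed.

End WeightedHomogeneity.

Lemma widen_lift_max n (i : 'I_n) : widen_ord (leqnSn n) i = lift ord_max i.
Proof. by apply: val_inj; rewrite /= /bump leqNgt ltn_ord. Qed.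

Section Cone.
Variables (k : fieldType) (n : nat) (w : 'I_n.+1 -> nat) (m : nat).
Local Notation S := {mpoly k[n.+1]}.
Local Notation S' := {mpoly k[n.+2]}.
Local Notation w' := (wext w m).
Local Notation y := ('X_ord_max : S').
Local Notation U := (U_(ord_max) : 'X_{1..n.+2})%MM.
Implicit Types (B : S) (A p : S') (a b : 'X_{1..n.+2}) (c : 'X_{1..n.+1}).

Lemma wext_widen i : w' (widen_ord (leqnSn _) i) = w i.
Proof. by rewrite /wext widen_lift_max liftK. Qed.

Lemma wext_max : w' ord_max = m.
Proof. by rewrite /wext unlift_none. Qed.

Lemma wdeg_mnmwiden c : wdeg w' (mnmwiden c) = wdeg w c.
Proof.
rewrite /wdeg big_ord_recr /= mnmwiden_ordmax muln0 addn0.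
by apply: eq_bigr => i _; rewrite wext_widen mnmwiden_widen.
Qed.

Lemma wdeg_U : wdeg w' U = m.
Proof.
rewrite /wdeg big_ord_recr /= mnm1E eqxx muln1 wext_max big1 // => i _.
by rewrite mnm1E -val_eqE /= gtn_eqF ?muln0.
Qed.

Lemma mnm_max0_widen a : a ord_max = 0%N -> exists c, a = mnmwiden c.
Proof.
move=> a0; exists [multinom a (widen_ord (leqnSn _) i) | i < n.+1].
apply/mnmP => i; have [j -> | ->] := unliftP ord_max i; last by rewrite mnmwiden_ordmax.
by rewrite -widen_lift_max mnmwiden_widen mnmE.
Qed.

Lemma mnm_max_gt0E a : (0 < a ord_max)%N -> a = (U + (a - U))%MM.
Proof.
move=> a_gt0; apply/mnmP => i; rewrite mnmDE mnmBE mnm1E.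
by case: eqP => [<- | _]; rewrite ?subn0 // add1n subn1 prednK.
Qed.

Lemma mcoeff_mwiden_max B a : a ord_max != 0%N -> (mwiden B)@_a = 0.
Proof.
move=> a_max; elim/mpolyind: B => [|x c B _ _ IH]; first by rewrite mwiden0 mcoeff0.
rewrite mwidenD mwidenZ mwidenX mcoeffD mcoeffZ mcoeffX IH addr0.
case: eqP => [ca | _]; last by rewrite mulr0.
by rewrite -ca mnmwiden_ordmax in a_max.
Qed.

Lemma mcoeff_mulX_max A a : a ord_max = 0%N -> (A * y)@_a = 0.
Proof.
move=> a_max; elim/mpolyind: A => [|x b A _ _ IH]; first by rewrite mul0r mcoeff0.
rewrite mulrDl -scalerAl mcoeffD mcoeffZ IH addr0 -mpolyXD mcoeffX.
case: eqP => [ba | _]; last by rewrite mulr0.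
by rewrite -ba mnmDE mnm1E eqxx addn1 in a_max.
Qed.

Lemma mcoeff_ysplit_widen B A c : (mwiden B + A * y)@_(mnmwiden c) = B@_c.
Proof. by rewrite mcoeffD mwiden_mnmwiden mcoeff_mulX_max ?addr0 ?mnmwiden_ordmax. Qed.

Lemma mcoeff_ysplit_shift B A b : (mwiden B + A * y)@_(U + b) = A@_b.
Proof. by rewrite mcoeffD mcoeffMX mcoeff_mwiden_max ?add0r // mnmDE mnm1E eqxx. Qed.

Lemma ysplit_inj B A B' A' :
  mwiden B + A * y = mwiden B' + A' * y -> B = B' /\ A = A'.
Proof.
move=> e; split; apply/mpolyP => a.
  by rewrite -(mcoeff_ysplit_widen B A) e mcoeff_ysplit_widen.
by rewrite -(mcoeff_ysplit_shift B A) e mcoeff_ysplit_shift.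
Qed.

Lemma ysplit_exists p : exists q : S * S', p == mwiden q.1 + q.2 * y.
Proof.
elim/mpolyind: p => [|x a p _ _ [[B A] /eqP ->]].
  by exists (0, 0); rewrite mwiden0 mul0r addr0.
have [a_max | a_max] := posnP (a ord_max).
  have [c ->] := mnm_max0_widen a_max.
  by exists (x *: 'X_[c] + B, A); rewrite /= mwidenD mwidenZ mwidenX addrA.
exists (B, x *: 'X_[a - U] + A); rewrite /= mulrDl -scalerAl -mpolyXD addmC.
by rewrite -mnm_max_gt0E // addrCA.
Qed.

Definition ysplit p : S * S' := xchoose (ysplit_exists p).
Definition ybase p := (ysplit p).1.
Definition ytail p := (ysplit p).2.

Lemma ysplitE p : p = mwiden (ybase p) + ytail p * y.
Proof. exact/eqP/(xchooseP (ysplit_exists p)). Qed.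

Lemma ysplitP p B A : p = mwiden B + A * y -> ybase p = B /\ ytail p = A.
Proof. by rewrite {1}[p]ysplitE; apply: ysplit_inj. Qed.

Lemma ysplit_linear (x : k) p q :
  ybase (x *: p + q) = x *: ybase p + ybase q /\
  ytail (x *: p + q) = x *: ytail p + ytail q.
Proof.
apply: ysplitP; rewrite mwidenD mwidenZ mulrDl -scalerAl addrACA -scalerDr.
by rewrite -!ysplitE.
Qed.

Lemma ybase_is_linear : linear ybase.
Proof. by move=> x p q; case: (ysplit_linear x p q). Qed.

Lemma ytail_is_linear : linear ytail.
Proof. by move=> x p q; case: (ysplit_linear x p q). Qed.

HB.instance Definition _ := GRing.isLinear.Build k S' S *:%R ybase ybase_is_linear.
HB.instance Definition _ := GRing.isLinear.Build k S' S' *:%R ytail ytail_is_linear.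

Lemma ysplit_mulr_widen A B :
  ybase (A * mwiden B) = ybase A * B /\ ytail (A * mwiden B) = ytail A * mwiden B.
Proof. by apply: ysplitP; rewrite {1}[A]ysplitE mulrDl mwidenM mulrAC. Qed.

Lemma whomog_mwiden t B : whomog w t B -> whomog w' t (mwiden B).
Proof.
move=> /whomogP homB; apply/whomogP => a.
have [a_max | a_max] := eqVneq (a ord_max) 0%N; last by rewrite mcoeff_mwiden_max ?eqxx.
by have [c ->] := mnm_max0_widen a_max; rewrite mwiden_mnmwiden wdeg_mnmwiden => /homB.
Qed.

Lemma whomog_mulX t A : whomog w' t A -> whomog w' (m + t) (A * y).
Proof.
move=> /whomogP homA; apply/whomogP => a.
have [a_max | a_max] := posnP (a ord_max); first by rewrite mcoeff_mulX_max ?eqxx.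
by rewrite (mnm_max_gt0E a_max) mcoeffMX wdegD wdeg_U => /homA ->.
Qed.

Lemma whomog_ysplit t p :
  whomog w' t p -> whomog w t (ybase p) /\ whomog w' (t - m) (ytail p).
Proof.
rewrite {1}[p]ysplitE => /whomogP homp; split; apply/whomogP => a.
  by rewrite -(mcoeff_ysplit_widen _ (ytail p)) => /homp; rewrite wdeg_mnmwiden.
by rewrite -(mcoeff_ysplit_shift (ybase p)) => /homp <-; rewrite wdegD wdeg_U addKn.
Qed.

Variable I : S -> Prop.
Local Notation J := (cone_ideal I).

Lemma cone_ideal_is_ideal : is_ideal J.
Proof.
split; first by exists [::]; rewrite big_nil.
  move=> _ _ [s1 [Is1 ->]] [s2 [Is2 ->]]; exists (s1 ++ s2); rewrite big_cat.
  by split=> // x; rewrite mem_cat => /orP [/Is1 | /Is2].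
move=> r _ [s [Is ->]]; exists [seq (r * x.1, x.2) | x <- s]; split.
  by move=> _ /mapP [x xs ->]; apply: Is xs.
by rewrite big_map mulr_sumr; apply: eq_bigr => x _; rewrite mulrA.
Qed.

Lemma cone_ideal_mwiden B : I B -> J (mwiden B).
Proof. by exists [:: (1, B)]; rewrite big_seq1 mul1r; split=> // x /[1!inE] /eqP ->. Qed.

Hypothesis idealI : is_ideal I.

Lemma cone_idealE p : J p <-> I (ybase p) /\ J (ytail p).
Proof.
have idealJ := cone_ideal_is_ideal; have [_ JD JM] := idealJ; split.
  move=> [s [Is ->]]; rewrite !linear_sum; split; apply: ideal_sum => // x /Is Ix.
    by rewrite /= (ysplit_mulr_widen x.1 x.2).1; have [_ _ IM] := idealI; apply: IM.
  by rewrite /= (ysplit_mulr_widen x.1 x.2).2; apply/JM/cone_ideal_mwiden.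
move=> [Ib Jt]; rewrite [p]ysplitE.
by apply: JD; [apply: cone_ideal_mwiden | rewrite mulrC; apply: JM].
Qed.

Lemma hilb_le_cone t h H s : hilb_fun w I t h ->
  hilb_fun w' J (t - m) H -> indep_mod w' J t s -> (size s <= h + H)%N.
Proof.
(* v |-> ybase and ytail of the combination of s with coefficients v embed
   the span of s modulo J into (S/I)_t x (S'/J)_(t-m). *)
move=> hI hJ [hom_s indep_s]; have [I0 ID _] := idealI.
have hom_split v := whomog_ysplit (whomog_lincomb v hom_s).
apply: (@rV_dim_le_add _ _ (fun v => I (ybase (lincomb v)))
                           (fun v => J (ytail (lincomb v)))).
- split=> [|u v|x u]; rewrite ?linear0 ?linearD ?linearZ //; first exact: ID.
  exact: idealZ.
- move=> v Iv Jv; apply/rowP => i; rewrite mxE; apply: indep_s.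
  exact/(cone_idealE (lincomb v)).
- exact: (hilb_fun_indep_rows (f := ybase \o lincomb (s := s)) hI
                              (fun v => (hom_split v).1)).
- exact: (hilb_fun_indep_rows (f := ytail \o lincomb (s := s)) hJ
                              (fun v => (hom_split v).2)).
Qed.

Lemma indep_mod_cone t s1 s2 : (m <= t)%N ->
  indep_mod w I t s1 -> indep_mod w' J (t - m) s2 ->
  indep_mod w' J t ([seq mwiden B | B <- s1] ++ [seq A * y | A <- s2]).
Proof.
move=> mt [hom1 indep1] [hom2 indep2]; split.
  rewrite all_cat !all_map; apply/andP; split; apply/allP => x xs /=.
    exact/whomog_mwiden/(allP hom1).
  by rewrite -(subnKC mt); apply/whomog_mulX/(allP hom2).
rewrite size_cat !size_map => c; rewrite big_split_ord /=.
under eq_bigr => i _ do rewrite nth_cat size_map ltn_ord (nth_map 0) // -mwidenZ.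
under [X in _ + X]eq_bigr => i _ do
  rewrite nth_cat size_map ltnNge leq_addr /= addKn (nth_map 0) // scalerAl.
rewrite -raddf_sum -mulr_suml => /cone_idealE.
set B := \sum_(i < size s1) _; set A := \sum_(i < size s2) _.
have [-> ->] := ysplitP (erefl (mwiden B + A * y)) => -[/indep1 c1 /indep2 c2] i.
by rewrite -(splitK i); case: (split i) => j; [apply: c1 | apply: c2].
Qed.

Lemma hilb_fun_cone t h H H' : (m <= t)%N -> hilb_fun w I t h ->
  hilb_fun w' J (t - m) H -> hilb_fun w' J t H' -> H' = (h + H)%N.
Proof.
move=> mt hI hJ [[s [<- indep_s]] le_H']; apply/eqP; rewrite eqn_leq.
rewrite (hilb_le_cone hI hJ indep_s) /=.
have [[s1 [<- indep1]] _] := hI; have [[s2 [<- indep2]] _] := hJ.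
by have := le_H' _ (indep_mod_cone mt indep1 indep2); rewrite size_cat !size_map.
Qed.

Lemma hilb_eventually_cone Q Q' :
  hilb_eventually w I Q -> hilb_eventually w' J Q' ->
  exists t0, forall t, (t0 <= t)%N -> Q' (t + m)%N%:Z = Q (t + m)%N%:Z + Q' t%:Z.
Proof.
move=> [t1 hQ] [t2 hQ']; exists (t1 + t2)%N => t t12.
have t12m : (t1 + t2 <= t + m)%N := leq_trans t12 (leq_addr _ _).
have [h [hI <-]] := hQ (t + m)%N (leq_trans (leq_addr _ _) t12m).
have [H [hJ <-]] := hQ' t (leq_trans (leq_addl _ _) t12).
have [H' [hJ' <-]] := hQ' (t + m)%N (leq_trans (leq_addl _ _) t12m).
by rewrite -natrD (hilb_fun_cone (leq_addl t m) hI (H := H) _ hJ') // addnK.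
Qed.

End Cone.

Lemma periodic_coeffs_dvd c d q q' :
  periodic_coeffs c d q -> (q %| q')%N -> periodic_coeffs c d q'.
Proof.
move=> per /dvdnP [r ->]; elim: r => [|r IH] i t id; first by rewrite addr0.
by rewrite mulSn PoszD addrCA addrC per // IH.
Qed.

Definition hqpoly (c : nat -> int -> rat) (d q b : nat) : {poly rat} :=
  \sum_(i < d.+1) c i b%:Z *: (q%:R *: 'X + b%:R%:P) ^+ i.

Lemma hqpolyE c d q b s : periodic_coeffs c d q ->
  (hqpoly c d q b).[s%:R] = hquasipoly c d (q * s + b)%N%:Z.
Proof.
move=> per; rewrite horner_sum; apply: eq_bigr => i _.
rewrite hornerZ horner_exp !hornerE -natrM -natrD addnC PoszD.
by rewrite (periodic_coeffs_dvd per (dvdn_mulr s (dvdnn q))) // -ltnS.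
Qed.

Lemma coef_linX_exp (R : comNzRingType) (a b : R) e j :
  ((a *: 'X + b%:P) ^+ e)`_j = a ^+ j * b ^+ (e - j) *+ 'C(e, j).
Proof.
rewrite addrC exprDn coef_sum (eq_bigr (fun i : 'I_e.+1 =>
  if i == j :> nat then a ^+ j * b ^+ (e - j) *+ 'C(e, j) else 0)) => [|i _].
  rewrite -big_mkcond (big_ord1_eq _ (fun=> a ^+ j * b ^+ (e - j) *+ 'C(e, j))) ltnS.
  by case: leqP => // /bin_small ->.
rewrite coefMn exprZn -polyC_exp -scalerAr coefZ coefCM coefXn eq_sym.
by case: eqP => [-> | _]; rewrite ?mulr1 // !mulr0 mul0rn.
Qed.

Lemma coef_hqpoly c d q b j : (hqpoly c d q b)`_j =
  \sum_(i < d.+1) c i b%:Z * (q%:R ^+ j * b%:R ^+ (i - j) *+ 'C(i, j)).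
Proof. by rewrite coef_sum; apply: eq_bigr => i _; rewrite coefZ coef_linX_exp. Qed.

Lemma coef_hqpoly_top c d q b : (hqpoly c d q b)`_d = c d b%:Z * q%:R ^+ d.
Proof.
rewrite coef_hqpoly big_ord_recr /= subnn binn mulr1 mulr1n big1 ?add0r // => i _.
by rewrite bin_small ?mulr0n ?mulr0.
Qed.

Lemma coef_hqpoly_subtop c d q b : (hqpoly c d.+1 q b)`_d =
  (c d b%:Z + c d.+1 b%:Z * b%:R * d.+1%:R) * q%:R ^+ d.
Proof.
rewrite coef_hqpoly !big_ord_recr /= subnn subSnn binn binSn mulr1 mulr1n expr1.
rewrite big1 ?add0r => [|i _]; last by rewrite bin_small ?mulr0n ?mulr0.
by rewrite -mulr_natr; ring.
Qed.

Lemma poly_eq_eventually (R : numDomainType) (p q : {poly R}) s0 :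
  (forall s, (s0 <= s)%N -> p.[s%:R] = q.[s%:R]) -> p = q.
Proof.
move=> pq; apply/eqP; rewrite -subr_eq0; apply/eqP.
apply: (@roots_geq_poly_eq0 _ _ [seq (s0 + i)%:R | i <- iota 0 (size (p - q))]).
- by apply/allP => _ /mapP [i _ ->]; rewrite /root hornerD hornerN pq ?leq_addr ?subrr.
- by rewrite map_inj_uniq ?iota_uniq // => i j /eqP; rewrite eqr_nat eqn_add2l => /eqP.
- by rewrite size_map size_iota.
Qed.

Lemma hquasipoly_diff_top c c' d q (b : nat -> nat) r s0 : (0 < q)%N ->
  periodic_coeffs c d q -> periodic_coeffs c' d.+1 q ->
  (forall s, (s0 <= s)%N ->
    hquasipoly c' d.+1 (q * s.+1)%N%:Z - hquasipoly c' d.+1 (q * s)%N%:Z =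
    \sum_(j < r) hquasipoly c d (q * s + b j)%N%:Z) ->
  d.+1%:R * q%:R * c' d.+1 0 = \sum_(j < r) c d (b j)%:Z.
Proof.
move=> q_gt0 per per' step.
have E : hqpoly c' d.+1 q q - hqpoly c' d.+1 q 0 = \sum_(j < r) hqpoly c d q (b j).
  apply: (@poly_eq_eventually _ _ _ s0) => s s0s.
  rewrite hornerD hornerN !hqpolyE // horner_sum addn0 -mulnSr step //.
  by apply: eq_bigr => j _; rewrite hqpolyE.
have /(congr1 (fun p : {poly rat} => p`_d)) := E.
rewrite coefB !coef_hqpoly_subtop coef_sum -[q%:Z]add0r !per' //.
under eq_bigr do rewrite coef_hqpoly_top.
rewrite -mulr_suml mulr0 mul0r addr0 -mulrBl addrC addKr => /mulIf <-.
  by ring.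
by rewrite expf_neq0 // pnatr_eq0 -lt0n.
Qed.

Section PeriodicSums.
Variable V : nmodType.
Implicit Type F : nat -> V.

Lemma recurrence_iter F G m t0 :
  (forall t, (t0 <= t)%N -> F (t + m)%N = G (t + m)%N + F t) ->
  forall r t, (t0 <= t)%N -> F (t + r * m)%N = F t + \sum_(j < r) G (t + j.+1 * m)%N.
Proof.
move=> step; elim=> [|r IH] t t0t; first by rewrite addn0 big_ord0 addr0.
rewrite big_ord_recr /= addrA -IH // mulSn [(m + _)%N]addnC addnA step.
  by rewrite addrC.
exact: leq_trans t0t (leq_addr _ _).
Qed.

Lemma sum_dvdn_range F g r : (0 < g)%N ->
  \sum_(0 <= j < r * g | (g %| j)%N) F j = \sum_(x < r) F (x * g)%N.
Proof.
move=> g_gt0; elim: r => [|r IH]; first by rewrite big_geq ?big_ord0.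
rewrite big_ord_recr -IH mulSnr (@big_cat_nat _ _ _ (r * g)) ?leq_addr //=.
congr (_ + _); rewrite big_ltn_cond; last by rewrite -addn1 leq_add2l.
rewrite /= (dvdn_mull r (dvdnn g)) big_nat_cond big_pred0 ?addr0 // => i.
apply/negbTE/andP => -[/andP [ltj jlt] /dvdnP [x jE]].
move: ltj jlt; rewrite jE -mulSnr !ltn_mul2r g_gt0 ltnS => rx xr.
by move: (leq_ltn_trans xr rx); rewrite ltnn.
Qed.

Lemma sum_periodic_multiples F q m : (0 < q)%N -> (forall x, F (x + q)%N = F x) ->
  \sum_(j < q %/ gcdn m q) F (j.+1 * m)%N = \sum_(0 <= j < q | (gcdn m q %| j)%N) F j.
Proof.
move=> q_gt0 Fper; set g := gcdn m q.
have g_gt0 : (0 < g)%N by rewrite gcdn_gt0 q_gt0 orbT.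
have Fmod x : F (x %% q)%N = F x.
  rewrite [in RHS](divn_eq x q) addnC; elim: (x %/ q)%N => [|i IH]; first by rewrite addn0.
  by rewrite mulSnr addnA Fper.
have [q1 qE] : exists q1, q = (q1 * g)%N by exists (q %/ g)%N; rewrite divnK ?dvdn_gcdr.
have [m1 mE] : exists m1, m = (m1 * g)%N by exists (m %/ g)%N; rewrite divnK ?dvdn_gcdl.
have q1_gt0 : (0 < q1)%N by move: q_gt0; rewrite qE muln_gt0 => /andP [].
have co : coprime q1 m1.
  by rewrite /coprime -(eqn_pmul2r g_gt0) mul1n muln_gcdl -qE -mE gcdnC.
rewrite qE mulnK // sum_dvdn_range //.
pose f (j : 'I_q1) := Ordinal (ltn_pmod (j.+1 * m1) q1_gt0).
have f_inj : injective f.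
  suff f_le (j j' : 'I_q1) : (j <= j')%N -> f j = f j' -> j = j'.
    by move=> j j' fj; case: (leqP j j') => [/f_le/(_ fj) | /ltnW/f_le/(_ (esym fj))].
  move=> le /(congr1 val) /= /eqP; rewrite eq_sym eqn_mod_dvd; last exact: leq_mul.
  rewrite -mulnBl Gauss_dvdl // subSS => dv; apply/val_inj.
  have [/eqP | /dvdn_leq/(_ dv) le_q1] := posnP (j' - j).
    by rewrite subn_eq0 => ge; apply/eqP; rewrite eqn_leq le ge.
  by have := leq_ltn_trans (leq_trans le_q1 (leq_subr j j')) (ltn_ord j'); rewrite ltnn.
rewrite [RHS](reindex_inj f_inj); apply: eq_bigr => j _ /=.
by rewrite muln_modl // -qE Fmod -mulnA -mE.
Qed.

End PeriodicSums.

Lemma wlcm_gt0 N (w : 'I_N -> nat) : (forall i, 0 < w i)%N -> (0 < wlcm w)%N.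
Proof.
by move=> w_gt0; rewrite /wlcm; elim/big_ind: _ => // x y; rewrite lcmn_gt0 => ->.
Qed.

Lemma wlcm_wext n (w : 'I_n.+1 -> nat) m : wlcm (wext w m) = lcmn (wlcm w) m.
Proof.
rewrite /wlcm big_ord_recr /= wext_max; congr lcmn.
by apply: eq_bigr => i _; rewrite wext_widen.
Qed.

Theorem lemma2p12 (k : closedFieldType) (n : nat) (w : 'I_n.+1 -> nat)
    (I : {mpoly k[n.+1]} -> Prop) (d : nat) (c : nat -> int -> rat) (m : nat) :
  (forall i, (0 < w i)%N) ->
  is_homog_ideal w I ->
  periodic_coeffs c d (wlcm w) ->
  (exists j : int, c d j != 0 :> rat) ->
  hilb_eventually w I (hquasipoly c d) ->
  (0 < m)%N ->
  forall c' : nat -> int -> rat,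
    periodic_coeffs c' d.+1 (wlcm (wext w m)) ->
    hilb_eventually (wext w m) (cone_ideal I) (hquasipoly c' d.+1) ->
    ((d.+1)`!)%:R * c' d.+1 0 =
      (d`!)%:R / (lcmn (wlcm w) m)%:R *
        \sum_(0 <= j < wlcm w | (gcdn m (wlcm w) %| j)%N) c d j%:Z.
Proof.
move=> w_gt0 [idealI _] per _ hilbI m_gt0 c' per' hilbJ.
rewrite wlcm_wext in per'; set q := wlcm w in per hilbI per' *.
set q2 := lcmn q m in per' *; set r := (q %/ gcdn m q)%N.
have q_gt0 : (0 < q)%N := wlcm_gt0 w_gt0.
have q2_gt0 : (0 < q2)%N by rewrite lcmn_gt0 q_gt0.
have q2E : q2 = (r * m)%N by rewrite /q2 /lcmn gcdnC divn_mulAC ?dvdn_gcdr.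
have [t0 step] := hilb_eventually_cone idealI hilbI hilbJ.
have period_step s : (t0 <= s)%N ->
    hquasipoly c' d.+1 (q2 * s.+1)%N%:Z - hquasipoly c' d.+1 (q2 * s)%N%:Z =
    \sum_(j < r) hquasipoly c d (q2 * s + j.+1 * m)%N%:Z.
  move=> t0s; rewrite mulnSr {2}q2E.
  rewrite (recurrence_iter (F := fun t => hquasipoly c' d.+1 t%:Z)
                           (G := fun t => hquasipoly c d t%:Z) step).
    by rewrite addrAC subrr add0r.
  by apply: leq_trans t0s _; rewrite leq_pmull.
have := hquasipoly_diff_top (b := fun j => (j.+1 * m)%N) q2_gt0
  (periodic_coeffs_dvd per (dvdn_lcml q m)) per' period_step.
rewrite -sum_periodic_multiples => [top||x]; last by rewrite PoszD per.
- by rewrite -top factS natrM; field; rewrite pnatr_eq0 -lt0n.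
- exact: q_gt0.
Qed.
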